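(* Let $n\ge1$, $\varepsilon\in D$, $s\in D^n$, and let $n'$ be the index produced by the recursive construction below. Then $L_n=n'+1-L_{n'}$ (with the convention $L_{-1}=0$).
   Context: Let $D$ be a commutative integral domain with $1\neq 0$. For $s=(s_1,\dots,s_n)\in D^n$ put $\underline{s}=s_1x^{-1}+\cdots+s_nx^{-n}\in D[x,x^{-1}]$; for a Laurent polynomial $F$, $F_k$ is the coefficient of $x^k$; $s^{(i)}=(s_1,\dots,s_i)$. A polynomial $f\in D[x]$ is an annihilator of $s$ if $f=0$, or $d=\deg f\ge0$ and $(f\cdot\underline{s})_{d-j}=0$ for $d+1\le j\le n$. $L(s)$ is the least degree of a nonzero annihilator of $s$, $L_j=L(s^{(j)})$, $L_0=0$. For nonzero $f\in D[x]$ and $t\in D^m$, $\Delta(f,t)=(f\cdot\underline{t})_{\deg f-m}$. Recursive construction (relative to a fixed $\varepsilon\in D$): put $\mu^{(-1)}=\varepsilon$, $\mu^{(0)}=1$, $\Delta_0=1$, $0'=-1$, and for $j\ge 0$ let $e_j=j+1-2\deg\mu^{(j)}$ (so $e_0=1$). For $j=1,\dots,n$ successively define: $\Delta_j=\Delta(\mu^{(j-1)},s^{(j)})$; the index $j'=(j-1)'$ if $\Delta_j=0$ or $e_{j-1}\le 0$, and $j'=j-1$ if $\Delta_j\neq0$ and $e_{j-1}>0$; $\Delta'_j=\Delta_{(j-1)'+1}$; and $\mu^{(j)}=\mu^{(j-1)}$ if $\Delta_j=0$, otherwise $\mu^{(j)}=\Delta'_j\,x^{\max\{e_{j-1},0\}}\mu^{(j-1)}-\Delta_j\,x^{\max\{-e_{j-1},0\}}\mu^{((j-1)')}$.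 *)

From HB Require Import structures.
From mathcomp Require Import all_boot all_order all_algebra.
From Stdlib Require Import ClassicalEpsilon.
Set Implicit Arguments. Unset Strict Implicit. Unset Printing Implicit Defensive.
Import Order.TTheory GRing.Theory Num.Theory.
Local Open Scope ring_scope.

Section BM.
Variable D : idomainType.

(* degree of a polynomial (used only on nonzero polynomials in the paper) *)
Definition pdeg (f : {poly D}) : nat := (size f).-1.

Definition coefz (f : {poly D}) (z : int) : D :=
  match z with Posz m => f`_m | Negz _ => 0 end.

(* (f * underline t)_k  where underline t = t_1 x^-1 + ... + t_m x^-m,
   t = [:: t_1; ...; t_m] (t`_i is t_(i+1)). *)
Definition lcoef (f : {poly D}) (t : seq D) (k : int) : D :=
  \sum_(i < size t) coefz f (k + i%:Z + 1) * t`_i.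

Definition annihilator (f : {poly D}) (s : seq D) : Prop :=
  f = 0 \/ forall j : nat, (pdeg f < j <= size s)%N ->
                          lcoef f s ((pdeg f)%:Z - j%:Z) = 0.

Definition pbool (P : Prop) : bool :=
  if excluded_middle_informative P then true else false.

Definition has_ann_deg (s : seq D) (d : nat) : bool :=
  pbool (exists f : {poly D}, [/\ f != 0, pdeg f = d & annihilator f s]).

Lemma has_ann_deg_ex (s : seq D) : exists d, has_ann_deg s d.
Proof.
exists (size s); rewrite /has_ann_deg /pbool.
case: excluded_middle_informative => // [[]].
exists 'X^(size s); split.
- by rewrite -size_poly_eq0 size_polyXn.
- by rewrite /pdeg size_polyXn.
- right=> j; rewrite /pdeg size_polyXn /= => /andP[H1 H2].
  by move: (leq_trans H1 H2); rewrite ltnn.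
Qed.

Definition L (s : seq D) : nat := ex_minn (has_ann_deg_ex s).

(* State after step j of the recursive construction:
   mu = mu^(j), mup = mu^(j'), jp = j', dp = Delta_{j'+1}. *)
Record bmstate := BMState { mu : {poly D}; mup : {poly D}; jp : int; dp : D }.

Definition bm_init (eps : D) : bmstate := BMState 1 eps%:P (-1) 1.

Definition bm_step (s : seq D) (j : nat) (st : bmstate) : bmstate :=
  let e : int := j%:Z - 2%:Z * (pdeg (mu st))%:Z in
  let Dj := lcoef (mu st) (take j s) ((pdeg (mu st))%:Z - j%:Z) in
  if Dj == 0 then st else
  let newmu := dp st *: ((if 0 < e then 'X^(absz e) else 1) * mu st)
               - Dj *: ((if 0 < e then 1 else 'X^(absz e)) * mup st) in
  if 0 < e then BMState newmu (mu st) (j.-1)%:Z Dj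
  else BMState newmu (mup st) (jp st) (dp st).

Fixpoint bm_run (s : seq D) (eps : D) (j : nat) : bmstate :=
  match j with
  | 0 => bm_init eps
  | j'.+1 => bm_step s j'.+1 (bm_run s eps j')
  end.

Definition Lz (s : seq D) (k : int) : nat :=
  match k with Posz m => L (take m s) | Negz _ => 0%N end.

End BM.

(* After step j the construction holds a minimal annihilator mu^(j) of s^(j)
   and, from the last step j' at which the length changed, mu^(j') with its
   nonzero discrepancy.  Massey's convolution argument shows that when mu^(j)
   fails at step j+1 every annihilator of s^(j+1) has degree at least
   j+1-L_j, so L_{j+1} >= max(L_j, j+1-L_j); the shifted combination
   mu^(j+1) attains this bound because its two discrepancies cancel.  Hence
   L_{j+1} = max(L_j, j+1-L_j), and j' is reset to j exactly when the
   maximum is j+1-L_j, which propagates L_j = j'+1-L_{j'}. *)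

From Pilot Require Import Defs.
From HB Require Import structures.
From mathcomp Require Import all_boot all_order all_algebra.
From mathcomp Require Import zify.
From Stdlib Require Import ClassicalEpsilon.
Import Order.TTheory GRing.Theory Num.Theory.
Local Open Scope ring_scope.

Section LinearComplexity.
Context {D : idomainType}.
Implicit Types (t : seq D) (f : {poly D}).

Lemma L_attained t : exists2 f, f != 0 & pdeg f = L t /\ annihilator f t.
Proof.
rewrite /L; case: ex_minnP => d; rewrite /has_ann_deg /pbool.
by case: excluded_middle_informative => // -[f [f_nz f_deg f_ann]] _ _; exists f.
Qed.

Lemma L_le_pdeg t f : f != 0 -> annihilator f t -> (L t <= pdeg f)%N.
Proof.
move=> f_nz f_ann; rewrite /L; case: ex_minnP => d _; apply.
by rewrite /has_ann_deg /pbool; case: excluded_middle_informative => // -[]; exists f.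
Qed.

Lemma L_le_size t : (L t <= size t)%N.
Proof.
have pdeg_Xn : pdeg ('X^(size t) : {poly D}) = size t by rewrite /pdeg size_polyXn.
rewrite -[X in (_ <= X)%N]pdeg_Xn L_le_pdeg ?monic_neq0 ?monicXn //.
by right=> j; rewrite pdeg_Xn => /andP[/leq_trans le_tj /le_tj]; rewrite ltnn.
Qed.

Lemma size_pdeg f : f != 0 -> size f = (pdeg f).+1.
Proof. by move=> f_nz; rewrite /pdeg prednK // size_poly_gt0. Qed.

End LinearComplexity.

Section BerlekampMassey.
Variables (D : idomainType) (s : seq D).
Implicit Types f g : {poly D}.

(* [lcoefn f m k] is [(f * underline s^(m))_k]; unlike [lcoef f (take m s) k]
   it ignores the length of [s], which makes prefixes easy to compare.
   [discr f m] is the paper's Delta(f, s^(m)). *)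
Definition lcoefn f (m : nat) (k : int) : D :=
  \sum_(i < m) coefz f (k + i%:Z + 1) * s`_i.

Definition discr f (m : nat) : D :=
  lcoefn f m ((pdeg f)%:Z - m%:Z).

Definition annihilates f (m : nat) : Prop :=
  forall j, (pdeg f < j <= m)%N -> discr f j = 0.

Lemma coefz_gt_pdeg f z : (pdeg f)%:Z < z -> coefz f z = 0.
Proof.
case: z => // k; rewrite ltz_nat => lt_fk.
by apply: nth_default; rewrite (leq_trans (leqSpred _)).
Qed.

Lemma coefz_lt0 f z : z < 0 -> coefz f z = 0.
Proof. by case: z. Qed.

Lemma lcoefn_trunc f m m' k : (m' <= m)%N -> (pdeg f)%:Z <= k + m'%:Z ->
  lcoefn f m k = lcoefn f m' k.
Proof.
move=> le_m'm le_fk; rewrite /lcoefn -(subnKC le_m'm) big_split_ord /=.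
by rewrite [X in _ + X]big1 ?addr0 // => i _; rewrite coefz_gt_pdeg ?mul0r //; lia.
Qed.

Lemma discr_window f m : (pdeg f < m)%N ->
  discr f m = \sum_(k < (pdeg f).+1) f`_k * s`_(m - (pdeg f).+1 + k).
Proof.
move=> lt_fm; move: (m - _)%N (subnK lt_fm) => c <-.
rewrite /discr /lcoefn big_split_ord /= big1 ?add0r => [|i _].
  by apply: eq_bigr => k _; rewrite (_ : _ + 1 = k%:Z) //; lia.
by rewrite coefz_lt0 ?mul0r //; have := ltn_ord i; lia.
Qed.

(* Massey's bound: convolving the windows of [f] and [g] over [s] in both
   orders, the sum vanishes by [g] and equals [lead_coef g * discr f j] by [f]. *)
Lemma massey_bound f g j : (pdeg f < j)%N ->
  (forall m, (pdeg f < m < j)%N -> discr f m = 0) -> discr f j != 0 ->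
  g != 0 -> annihilates g j -> (j - pdeg f <= pdeg g)%N.
Proof.
move=> lt_fj f_ann f_discr g_nz g_ann; rewrite leqNgt; apply/negP => lt_gj.
set a := pdeg f in lt_fj f_ann f_discr lt_gj *.
set b := pdeg g in g_ann lt_gj *.
pose c := (j - a - b - 1)%N.
pose S := \sum_(k < a.+1) \sum_(l < b.+1) f`_k * g`_l * s`_(c + k + l).
have window_f l : (l <= b)%N ->
    \sum_(k < a.+1) f`_k * s`_(c + k + l) = discr f (c + l + a.+1).
  move=> le_lb; rewrite discr_window; last by lia.
  by apply: eq_bigr => k _; rewrite -/a; congr (_ * s`_ _); lia.
have window_g k : (k <= a)%N ->
    \sum_(l < b.+1) g`_l * s`_(c + k + l) = discr g (c + k + b.+1).
  by move=> le_ka; rewrite discr_window; [apply: eq_bigr => l _; rewrite addnK | lia].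
have S0 : S = 0.
  rewrite /S big1 // => k _; have := ltn_ord k => lt_ka.
  under eq_bigr do rewrite -mulrA.
  by rewrite -big_distrr /= window_g ?g_ann ?mulr0 //; lia.
have S_lead : S = lead_coef g * discr f j.
  rewrite /S exchange_big /= big_ord_recr /= big1 ?add0r => [|l _].
    under eq_bigr do rewrite -mulrA mulrCA.
    rewrite -big_distrr /= (discr_window f j lt_fj); congr (_ * _).
    by apply: eq_bigr => k _; rewrite -/a; congr (_ * s`_ _); lia.
  have := ltn_ord l => lt_lb; under eq_bigr do rewrite -mulrA mulrCA.
  by rewrite -big_distrr /= window_f ?f_ann ?mulr0 //; lia.
move/eqP: S0; rewrite S_lead mulf_eq0 lead_coef_eq0.
by rewrite (negbTE g_nz) (negbTE f_discr).
Qed.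

Lemma coefz_scaleXn c a f z :
  coefz (c *: ('X^a * f)) z = c * coefz f (z - a%:Z).
Proof.
case: z => [k|k] /=; last by rewrite coefz_lt0 ?mulr0 //; lia.
rewrite coefZ coefXnM; case: ltnP => [lt_ka|le_ak].
  by rewrite coefz_lt0 ?mulr0 //; lia.
by rewrite (_ : _ - _ = (k - a)%N%:Z) //; lia.
Qed.

Lemma coefzB f g z : coefz (f - g) z = coefz f z - coefz g z.
Proof. by case: z => [k|k] /=; rewrite ?coefB ?subr0. Qed.

Lemma lcoefnB f g m k : lcoefn (f - g) m k = lcoefn f m k - lcoefn g m k.
Proof. by rewrite /lcoefn -sumrB; apply: eq_bigr => i _; rewrite coefzB mulrBl. Qed.

Lemma lcoefn_scaleXn c a f m k :
  lcoefn (c *: ('X^a * f)) m k = c * lcoefn f m (k - a%:Z).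
Proof.
rewrite /lcoefn big_distrr; apply: eq_bigr => i _.
by rewrite coefz_scaleXn -mulrA; congr (_ * (coefz f _ * _)); lia.
Qed.

Lemma annihilates_le f m j : (j <= m)%N -> annihilates f m -> annihilates f j.
Proof. by move=> le_jm f_ann i /andP[lt_fi le_ij]; rewrite f_ann ?lt_fi ?(leq_trans le_ij). Qed.

Lemma annihilatesS f j : annihilates f j -> discr f j.+1 = 0 -> annihilates f j.+1.
Proof.
move=> f_ann f_discr i /andP[lt_fi]; rewrite leq_eqVlt ltnS => /orP[/eqP -> // | le_ij].
by rewrite f_ann ?lt_fi.
Qed.

Section Combination.
Context {mu nu : {poly D}} {c1 c2 : D} {a b : nat}.
Let comb := c1 *: ('X^a * mu) - c2 *: ('X^b * nu).

Lemma pdeg_comb : mu != 0 -> c1 != 0 -> (size (c2 *: ('X^b * nu)) <= a + pdeg mu)%N ->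
  comb != 0 /\ pdeg comb = (a + pdeg mu)%N.
Proof.
move=> mu_nz c1_nz small_nu.
have size_mu : size (c1 *: ('X^a * mu)) = (a + pdeg mu).+1.
  by rewrite size_scale // mulrC size_mulXn // size_pdeg // addnS.
have size_comb : size comb = (a + pdeg mu).+1.
  by rewrite /comb size_polyDl ?size_polyN size_mu // ltnS.
by rewrite -size_poly_eq0 /pdeg size_comb.
Qed.

(* The shifts are aligned so that the discrepancies of [mu] at [j.+1] and of
   [nu] at [j'.+1] meet at the same coefficient, where they cancel. *)
Lemma comb_annihilates j j' : (j' < j)%N ->
  annihilates mu j -> discr mu j.+1 = c2 ->
  annihilates nu j' -> discr nu j'.+1 = c1 ->
  (a + pdeg mu + j' = b + pdeg nu + j)%N -> pdeg comb = (a + pdeg mu)%N ->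
  annihilates comb j.+1.
Proof.
move=> lt_j'j mu_ann mu_discr nu_ann nu_discr shift deg_comb m.
rewrite deg_comb => /andP[lt_m le_mj].
rewrite /discr deg_comb lcoefnB !lcoefn_scaleXn.
have -> : lcoefn mu m ((a + pdeg mu)%N%:Z - m%:Z - a%:Z) = discr mu m.
  by rewrite /discr; congr lcoefn; lia.
have -> : lcoefn nu m ((a + pdeg mu)%N%:Z - m%:Z - b%:Z) = discr nu (m - (j - j')).
  rewrite /discr (@lcoefn_trunc _ m (m - (j - j'))%N); try lia.
  by congr lcoefn; lia.
move: le_mj; rewrite leq_eqVlt ltnS => /orP[/eqP ->|le_mj].
  rewrite (_ : j.+1 - _ = j'.+1)%N; last by lia.
  by rewrite mu_discr nu_discr mulrC subrr.
by rewrite mu_ann ?nu_ann ?mulr0 ?subrr //; lia.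
Qed.

End Combination.

Lemma lcoef_take f m k : (m <= size s)%N -> lcoef f (take m s) k = lcoefn f m k.
Proof. by move=> le_ms; rewrite /lcoef size_takel //; apply: eq_bigr => i _; rewrite nth_take. Qed.

Lemma lcoef_take_discr f m j : (j <= m <= size s)%N ->
  lcoef f (take m s) ((pdeg f)%:Z - j%:Z) = discr f j.
Proof. by move=> /andP[le_jm le_ms]; rewrite lcoef_take // (@lcoefn_trunc _ m j) //; lia. Qed.

Lemma annihilator_take f m : (m <= size s)%N -> f != 0 ->
  annihilator f (take m s) <-> annihilates f m.
Proof.
move=> le_ms f_nz; rewrite /annihilator size_takel //; split.
  case=> [f0|f_ann j /andP[lt_fj le_jm]]; first by rewrite f0 eqxx in f_nz.
  by rewrite -(@lcoef_take_discr _ m) ?le_jm // f_ann ?lt_fj.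
move=> f_ann; right=> j /andP[lt_fj le_jm].
by rewrite lcoef_take_discr ?le_jm // f_ann ?lt_fj.
Qed.

Definition minimal_ann f j := [/\ f != 0, annihilates f j & pdeg f = L (take j s)].

Lemma L_take_le_pdeg f j : (j <= size s)%N -> f != 0 -> annihilates f j ->
  (L (take j s) <= pdeg f)%N.
Proof. by move=> le_js f_nz /(annihilator_take _ _ le_js f_nz); apply: L_le_pdeg. Qed.

Lemma minimal_annI f j : (j <= size s)%N -> f != 0 -> annihilates f j ->
  (pdeg f <= L (take j s))%N -> minimal_ann f j.
Proof.
move=> le_js f_nz f_ann le_fL; split=> //.
by apply/eqP; rewrite eqn_leq le_fL L_take_le_pdeg.
Qed.

Lemma minimal_ann_exists j : (j <= size s)%N -> exists f, minimal_ann f j.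
Proof.
move=> le_js; have [f f_nz [f_deg f_ann]] := L_attained (take j s).
by exists f; split; rewrite // -(annihilator_take _ _ le_js f_nz).
Qed.

Lemma L_take_le j : (j <= size s)%N -> (L (take j s) <= j)%N.
Proof. by move=> le_js; rewrite -[X in (_ <= X)%N](size_takel le_js) L_le_size. Qed.

Lemma L_take_mono j m : (j <= m <= size s)%N -> (L (take j s) <= L (take m s))%N.
Proof.
move=> /andP[le_jm le_ms]; have [g [g_nz g_ann <-]] := minimal_ann_exists _ le_ms.
by apply: L_take_le_pdeg _ _ (leq_trans le_jm le_ms) g_nz (annihilates_le _ _ _ le_jm g_ann).
Qed.

Lemma L_takeS_jump f j : (j < size s)%N -> minimal_ann f j -> discr f j.+1 != 0 ->
  (j.+1 - L (take j s) <= L (take j.+1 s))%N.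
Proof.
move=> lt_js [f_nz f_ann f_deg] f_discr.
have [g [g_nz g_ann <-]] := minimal_ann_exists _ lt_js.
have le_Lj := L_take_le _ (ltnW lt_js).
rewrite -f_deg massey_bound // ?f_deg ?ltnS //.
Qed.

Variable eps : D.

Definition bm_prev (j : nat) (st : bmstate D) : Prop :=
  (jp st = -1 /\ Defs.mup st = eps%:P) \/
  exists2 j' : nat, (j' < j)%N /\ jp st = j'%:Z &
    minimal_ann (Defs.mup st) j' /\ discr (Defs.mup st) j'.+1 = dp st.

Definition bm_invariant (j : nat) (st : bmstate D) : Prop :=
  [/\ minimal_ann (mu st) j, dp st != 0, bm_prev j st
    & (L (take j s))%:Z = jp st + 1 - (Lz s (jp st))%:Z].

Lemma bm_prevS j st : bm_prev j st -> bm_prev j.+1 st.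
Proof.
case=> [jp_m1|[j' [lt_j'j jp_j'] mup_min]]; first by left.
by right; exists j'; first split; rewrite ?(leqW lt_j'j).
Qed.

Lemma bm_invariant_init : bm_invariant 0 (bm_init eps).
Proof.
have pdeg1 : pdeg (1 : {poly D}) = 0%N by rewrite /pdeg size_poly1.
have L0 : L (take 0 s) = 0%N.
  by apply/eqP; rewrite -leqn0 take0 (L_le_size [::]).
split=> /=.
- split; first exact: oner_neq0.
    by move=> j; rewrite pdeg1 => /andP[/leq_trans le_j /le_j].
  by rewrite pdeg1 L0.
- exact: oner_neq0.
- by left.
- by rewrite L0.
Qed.

Lemma bm_invariant_stall j st : (j < size s)%N -> bm_invariant j st ->
  discr (mu st) j.+1 = 0 -> bm_invariant j.+1 st.
Proof.
move=> lt_js [[mu_nz mu_ann mu_deg] dp_nz prev HL] mu_discr.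
have mu_min : minimal_ann (mu st) j.+1.
  by apply: minimal_annI; rewrite ?mu_deg ?L_take_mono ?leqnSn //; apply: annihilatesS.
have [_ _ L_eq] := mu_min; rewrite mu_deg in L_eq.
by split; rewrite -?L_eq //; apply: bm_prevS.
Qed.

Lemma LzN1 : Lz s (-1) = 0%N. Proof. by []. Qed.

Lemma Lz_nat m : Lz s m%:Z = L (take m s). Proof. by []. Qed.

Lemma bm_comb_minimal j st a b : (j < size s)%N -> bm_invariant j st ->
  discr (mu st) j.+1 != 0 ->
  (a + L (take j s))%:Z + jp st = (b + Lz s (jp st) + j)%N%:Z ->
  (a + L (take j s) = maxn (L (take j s)) (j.+1 - L (take j s)))%N ->
  minimal_ann (dp st *: ('X^a * mu st) - discr (mu st) j.+1 *: ('X^b * Defs.mup st)) j.+1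
  /\ L (take j.+1 s) = (a + L (take j s))%N.
Proof.
move=> lt_js [mu_min dp_nz prev _] D_nz shift deg_max.
have [mu_nz mu_ann mu_deg] := mu_min.
rewrite -mu_deg in shift deg_max.
have small_mup : (size (discr (mu st) j.+1 *: ('X^b * Defs.mup st)) <= a + pdeg (mu st))%N.
  rewrite (leq_trans (size_scale_leq _ _)) // mulrC.
  case: prev => [[jp_m1 ->]|[j' [lt_j'j jp_j'] [[nu_nz _ nu_deg] _]]].
    rewrite (leq_trans (size_polyMleq _ _)) // size_polyXn.
    by move: shift; rewrite jp_m1 LzN1; have := size_polyC_leq1 eps; lia.
  by rewrite size_mulXn // size_pdeg // nu_deg; move: shift; rewrite jp_j' Lz_nat; lia.
have [P_nz P_deg] := pdeg_comb mu_nz dp_nz small_mup.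
set P := _ - _ in P_nz P_deg *.
suff P_min : minimal_ann P j.+1 by split=> //; case: P_min => _ _ <-; rewrite P_deg mu_deg.
apply: minimal_annI => //.
  case: prev => [[jp_m1 _]|[j' [lt_j'j jp_j'] [[_ nu_ann nu_deg] nu_discr]]].
    move=> m; rewrite P_deg => /andP[lt_m le_m]; exfalso.
    by move: shift; rewrite jp_m1 LzN1; lia.
  apply: (comb_annihilates j j') => //.
  by rewrite nu_deg; move: shift; rewrite jp_j' Lz_nat; lia.
rewrite P_deg deg_max geq_max mu_deg L_take_mono ?leqnSn //=.
exact: L_takeS_jump _ _ lt_js mu_min D_nz.
Qed.

Lemma bm_invariant_step j st : (j < size s)%N -> bm_invariant j st ->
  bm_invariant j.+1 (bm_step s j.+1 st).
Proof.
move=> lt_js inv; have [mu_min dp_nz prev HL] := inv; have [_ _ mu_deg] := mu_min.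
rewrite /bm_step lcoef_take_discr; last by rewrite leqnn.
case: eqP => [D0|/eqP D_nz]; first exact: bm_invariant_stall.
have le_Lj := L_take_le _ (ltnW lt_js).
rewrite mu_deg; case: ifP => e_pos; rewrite e_pos -(expr0 'X).
  have [P_min L_eq] := bm_comb_minimal _ _ `|((j.+1)%:Z - 2%:Z * (L (take j s))%:Z)%R| 0
                         lt_js inv D_nz ltac:(lia) ltac:(lia).
  split=> //=; last by rewrite L_eq; lia.
  by right; exists j.
have [P_min L_eq] := bm_comb_minimal _ _ 0 `|((j.+1)%:Z - 2%:Z * (L (take j s))%:Z)%R|
                       lt_js inv D_nz ltac:(lia) ltac:(lia).
by split=> //=; [apply: bm_prevS | rewrite L_eq].
Qed.

Lemma bm_invariant_run j : (j <= size s)%N -> bm_invariant j (bm_run s eps j).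
Proof.
elim: j => [|j IHj] le_js; first exact: bm_invariant_init.
exact: bm_invariant_step (IHj (ltnW le_js)).
Qed.

End BerlekampMassey.

Theorem mainTheorem6 (D : idomainType) (n : nat) (eps : D) (s : seq D)
  (Hsize : size s = n) (Hn : (1 <= n)%N) :
  let n' := jp (bm_run s eps n) in
  ((L (take n s))%:Z = n' + 1 - (Lz s n')%:Z)%R.
Proof. by have [] := @bm_invariant_run D s eps n (eq_leq (esym Hsize)). Qed.
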